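(* Let $A$ be a nonempty finite set, $\Sigma\in\mathbb{R}$, and let $\sigma$ be a $\Sigma$-proximity on $A$. Then the function $d:A^2\to\mathbb{R}$ defined by $$d(x,y)=\tfrac12\big(\sigma(x,x)+\sigma(y,y)\big)-\sigma(x,y)$$ is a metric on $A$.
   Context: A metric on $A$ is a function $d:A^2\to\mathbb{R}$ such that for all $x,y,z\in A$: $d(x,y)=0$ iff $x=y$, and $d(x,y)+d(x,z)-d(y,z)\ge 0$. A function $\sigma:A^2\to\mathbb{R}$ is a $\Sigma$-proximity on $A$ if for all $x,y,z\in A$: (1) $\sum_{t\in A}\sigma(x,t)=\Sigma$; (2) $\sigma(x,y)+\sigma(x,z)-\sigma(y,z)\le\sigma(x,x)$, with strict inequality whenever $z=y$ and $x\ne y$. *)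

From mathcomp Require Import all_boot all_order all_algebra.
Set Implicit Arguments. Unset Strict Implicit. Unset Printing Implicit Defensive.
Import Order.TTheory GRing.Theory Num.Theory.
Local Open Scope ring_scope.

Definition is_metric (R : realFieldType) (A : finType) (d : A -> A -> R) : Prop :=
  (forall x y : A, d x y = 0 <-> x = y) /\
  (forall x y z : A, 0 <= d x y + d x z - d y z).

Definition is_proximity (R : realFieldType) (A : finType) (Sigma : R)
    (sigma : A -> A -> R) : Prop :=
  (forall x : A, \sum_(t : A) sigma x t = Sigma) /\
  (forall x y z : A, sigma x y + sigma x z - sigma y z <= sigma x x) /\
  (forall x y : A, x != y -> sigma x y + sigma x y - sigma y y < sigma x x).

From mathcomp Require Import all_boot all_order all_algebra.
From mathcomp Require Import lra.
Import Order.TTheory GRing.Theory Num.Theory.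
Local Open Scope ring_scope.

(* The triangle expression d(x,y) + d(x,z) - d(y,z) of the induced distance
   collapses to sigma(x,x) - (sigma(x,y) + sigma(x,z) - sigma(y,z)), so the
   second proximity axiom is exactly the triangle inequality, and its strict
   case z = y says d(x,y) > 0 for x != y. *)

Section ProximityDistance.

Context {R : realFieldType} {T : Type} (sigma : T -> T -> R).

Definition prox_dist (x y : T) : R :=
  2^-1 * (sigma x x + sigma y y) - sigma x y.

Lemma prox_distxx (x : T) : prox_dist x x = 0.
Proof. rewrite /prox_dist; lra. Qed.

Lemma prox_dist_triangleE (x y z : T) :
  prox_dist x y + prox_dist x z - prox_dist y z =
  sigma x x - (sigma x y + sigma x z - sigma y z).
Proof. rewrite /prox_dist; lra. Qed.

Lemma prox_dist_gt0 {x y : T} :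
  sigma x y + sigma x y - sigma y y < sigma x x -> 0 < prox_dist x y.
Proof. rewrite /prox_dist; lra. Qed.

End ProximityDistance.

Theorem proposition3 (R : realFieldType) (A : finType) (a0 : A) (Sigma : R)
    (sigma : A -> A -> R) :
  is_proximity Sigma sigma ->
  is_metric (fun x y : A => 2^-1 * (sigma x x + sigma y y) - sigma x y).
Proof.
move=> [_ [prox_le prox_lt]]; change (is_metric (prox_dist sigma)); split.
- move=> x y; split=> [dxy0|->]; last exact: prox_distxx.
  have [//|neq_xy] := eqVneq x y.
  by have := prox_dist_gt0 sigma (prox_lt x y neq_xy); rewrite dxy0 ltxx.
- by move=> x y z; rewrite prox_dist_triangleE subr_ge0.
Qed.
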